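(* Let $(\Omega, \mathcal R, \mathcal K)$ be a kinetic system that satisfies the detailed balance property. If $\mathcal M \neq \{0\}$, then there exists an $s \in \Omega$ such that the reduced system $(V, \mathcal R_V, \mathcal K[n_s])$, with $V := \Omega \setminus \{s\}$, satisfies the detailed balance condition for any value of $n_s > 0$.
   Context: A kinetic system $(\Omega,\mathcal R,\mathcal K)$ is a bidirectional chemical network with substances $\Omega=\{1,\dots,N\}$, reactions $\mathcal R\subset\mathbb Z^N\setminus\{0\}$ (with $R\in\mathcal R\Rightarrow -R\in\mathcal R$) and mass-action rates $K_R>0$; $I(R)=\{i:R(i)<0\}$, $F(R)=\{i:R(i)>0\}$. It satisfies detailed balance if there is $\overline N\in\mathbb R_+^N$ with $K_R\prod_{i\in I(R)}\overline N_i^{-R(i)}=K_{-R}\prod_{i\in F(R)}\overline N_i^{R(i)}$ for all reactions $R$. $\mathcal M=(\operatorname{span}\mathcal R)^\perp$ is the space of conservation laws. For $U=\{s\}$ and $V=\Omega\setminus\{s\}$, $\pi_V$ is the projection onto coordinates in $V$, the reduced reactions are $\mathcal R_V=\{\pi_V\overline R\neq0:\overline R\in\mathcal R\}$, and the reduced rates are $\mathcal K[n_s](R)=\sum_{\overline R\in\mathcal R:\ \pi_V\overline R=R}K_{\overline R}\, n_s^{-\overline R(s)\mathbf 1[\overline R(s)<0]}$ (i.e. $K_{\overline R}$ multiplied by $n_s^{-\overline R(s)}$ when $s\in I(\overline R)$). *)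

From HB Require Import structures.
From mathcomp Require Import all_boot all_order all_algebra.
From mathcomp Require Import reals.
Set Implicit Arguments. Unset Strict Implicit. Unset Printing Implicit Defensive.
Import Order.TTheory GRing.Theory Num.Theory.
Local Open Scope ring_scope.

Definition reaction (T : finType) := {ffun T -> int}.

Section Kinetic.
Variables (R : realType) (T : finType).

Definition kinetic_system (Rs : seq (reaction T)) (K : reaction T -> R) : Prop :=
  [/\ uniq Rs,
      forall r, r \in Rs -> r != 0,
      forall r, r \in Rs -> - r \in Rs
    & forall r, r \in Rs -> 0 < K r].

Definition detailed_balance (Rs : seq (reaction T)) (K : reaction T -> R) : Prop :=
  exists Nbar : T -> R, (forall i, 0 < Nbar i) /\
    forall r, r \in Rs ->
      K r * \prod_(i | r i < 0) Nbar i ^+ `|r i|%N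
      = K (- r) * \prod_(i | 0 < r i) Nbar i ^+ `|r i|%N.

Definition in_span (Rs : seq (reaction T)) (v : T -> R) : Prop :=
  exists c : reaction T -> R,
    forall i, v i = \sum_(r <- Rs) c r * (r i)%:~R.

Definition conservation_law (Rs : seq (reaction T)) (m : T -> R) : Prop :=
  forall v, in_span Rs v -> \sum_i m i * v i = 0.

End Kinetic.

Section Reduced.
Variables (R : realType) (T : finType) (s : T).

Definition Vsub := {x : T | x != s}.

Definition projV (r : reaction T) : reaction Vsub := [ffun v : Vsub => r (val v)].

Definition reduced_reactions (Rs : seq (reaction T)) : seq (reaction Vsub) :=
  undup [seq projV r | r <- Rs & projV r != 0].

Definition reduced_rates (Rs : seq (reaction T)) (K : reaction T -> R) (ns : R)
    (r : reaction Vsub) : R :=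
  \sum_(rb <- Rs | projV rb == r)
     K rb * (if rb s < 0 then ns ^+ `|rb s|%N else 1).

End Reduced.
Arguments Vsub : clear implicits.
Arguments projV {T} s r.
Arguments reduced_reactions {T} s Rs.
Arguments reduced_rates {R T} s Rs K ns r.

From HB Require Import structures.
From mathcomp Require Import all_boot all_order all_algebra.
From mathcomp Require Import reals sequences exp.
Set Implicit Arguments. Unset Strict Implicit. Unset Printing Implicit Defensive.
Import Order.TTheory GRing.Theory Num.Theory.
Local Open Scope ring_scope.

(* A detailed-balance equilibrium Nbar can be moved along any conservation
   law m: Nbar_i exp(lam m_i) is still an equilibrium, because m is
   orthogonal to every reaction.  Choosing s with m_s <> 0 and lam so that
   the s-coordinate equals n_s, the restriction of this equilibrium to V
   balances the reduced system: the reduced flux of a projected reaction is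
   the sum of the full fluxes of the reactions projecting onto it, and
   negation matches these sums for r and -r term by term. *)

Lemma perm_map_opp (V : zmodType) (s : seq V) :
  uniq s -> {in s, forall x, - x \in s} -> perm_eq s (map -%R s).
Proof.
move=> s_uniq s_opp; apply: uniq_perm => //.
  by rewrite (map_inj_uniq (@oppr_inj _)).
move=> x; rewrite -{2}(opprK x) (mem_map (@oppr_inj _)).
by apply/idP/idP => /s_opp; rewrite ?opprK.
Qed.

Section MassAction.
Variables (R : realType) (T : finType).
Implicit Types (N : T -> R) (r : reaction T) (Rs : seq (reaction T)).

Definition mass_action N r : R := \prod_(i | r i < 0) N i ^+ `|r i|%N.

Definition balanced Rs (K : reaction T -> R) N :=
  forall r, r \in Rs -> K r * mass_action N r = K (- r) * mass_action N (- r).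

Lemma mass_actionN N r :
  mass_action N (- r) = \prod_(i | 0 < r i) N i ^+ `|r i|%N.
Proof. by apply: eq_big => i; rewrite ffunE ?oppr_lt0 ?abszN. Qed.

Lemma detailed_balanceP Rs K :
  detailed_balance Rs K <-> exists2 N, (forall i, 0 < N i) & balanced Rs K N.
Proof.
split=> [[N [N_gt0 bal]] | [N N_gt0 bal]].
  by exists N => // r /bal; rewrite mass_actionN.
by exists N; split=> // r /bal; rewrite mass_actionN.
Qed.

Lemma mass_actionM N M r :
  mass_action (fun i => N i * M i) r = mass_action N r * mass_action M r.
Proof. by rewrite -big_split; apply: eq_bigr => i _; rewrite exprMn. Qed.

Lemma mass_action_expR (f : T -> R) r :
  mass_action (fun i => expR (f i)) r = expR (\sum_(i | r i < 0) `|r i|%:R * f i).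
Proof. by rewrite expR_sum; apply: eq_bigr => i _; rewrite expRM_natl. Qed.

Lemma sum_mul_int_sign (f : T -> R) r :
  \sum_i (r i)%:~R * f i =
  \sum_(i | 0 < r i) `|r i|%:R * f i - \sum_(i | r i < 0) `|r i|%:R * f i.
Proof.
rewrite [X in _ = X - _]big_mkcond [X in _ = _ - X]big_mkcond -sumrB.
apply: eq_bigr => i _; case: (ltrgt0P (r i)) => [r_gt0 | r_lt0 | ->].
- by rewrite subr0 natr_absz gtr0_norm.
- by rewrite sub0r natr_absz ltr0_norm // intrN mulNr opprK.
- by rewrite mul0r subr0.
Qed.

Lemma mass_action_expR_opp (f : T -> R) r :
  \sum_i (r i)%:~R * f i = 0 ->
  mass_action (fun i => expR (f i)) r = mass_action (fun i => expR (f i)) (- r).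
Proof.
rewrite sum_mul_int_sign => /eqP; rewrite subr_eq0 => /eqP orth_r.
rewrite mass_actionN mass_action_expR -orth_r expR_sum.
by apply: eq_bigr => i _; rewrite expRM_natl.
Qed.

Lemma conservation_law_orth Rs (m : T -> R) r :
  uniq Rs -> conservation_law Rs m -> r \in Rs -> \sum_i (r i)%:~R * m i = 0.
Proof.
move=> Rs_uniq cl_m r_Rs; rewrite -[RHS](cl_m (fun i => (r i)%:~R)).
  by apply: eq_bigr => i _; rewrite mulrC.
exists (fun r' => (r' == r)%:R) => i.
rewrite (bigID (pred1 r)) /= -big_filter filter_pred1_uniq // big_seq1.
rewrite eqxx mul1r big1 ?addr0 //.
by move=> r' /negbTE ->; rewrite mul0r.
Qed.

Lemma balanced_shift Rs K N (m : T -> R) (lam : R) :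
  (forall r, r \in Rs -> \sum_i (r i)%:~R * m i = 0) ->
  balanced Rs K N -> balanced Rs K (fun i => N i * expR (lam * m i)).
Proof.
move=> orth bal r r_Rs; rewrite !mass_actionM !mulrA bal //; congr (_ * _).
apply: mass_action_expR_opp.
under eq_bigr do rewrite mulrCA.
by rewrite -mulr_sumr orth ?mulr0.
Qed.

End MassAction.

Section Reduction.
Variables (R : realType) (T : finType) (s : T).
Implicit Types (N : T -> R) (Rs : seq (reaction T)) (K : reaction T -> R).

Lemma projVN (r : reaction T) : projV s (- r) = - projV s r.
Proof. by apply/ffunP => v; rewrite !ffunE. Qed.

Lemma mass_action_projV N (r : reaction T) :
  mass_action N r = (if r s < 0 then N s ^+ `|r s|%N else 1) *
                    mass_action (fun v : Vsub T s => N (val v)) (projV s r).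
Proof.
rewrite /mass_action big_mkcond (bigD1 s) //= [X in _ = _ * X]big_mkcond.
congr (_ * _); rewrite (reindex_omap (val : Vsub T s -> T) insub) => [|i i_s].
  apply: eq_big => [[i i_s] | v _] /=; first by rewrite insubT i_s /= eqxx.
  by rewrite ffunE.
by rewrite insubT.
Qed.

Lemma reduced_fluxE Rs K N (r : reaction (Vsub T s)) :
  reduced_rates s Rs K (N s) r * mass_action (fun v => N (val v)) r =
  \sum_(rb <- Rs | projV s rb == r) K rb * mass_action N rb.
Proof.
rewrite mulr_suml; apply: eq_bigr => rb /eqP <-.
by rewrite mass_action_projV mulrA.
Qed.

Lemma balanced_reduced Rs K N :
  uniq Rs -> {in Rs, forall r, - r \in Rs} -> balanced Rs K N ->
  balanced (reduced_reactions s Rs) (reduced_rates s Rs K (N s))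
           (fun v => N (val v)).
Proof.
move=> Rs_uniq Rs_opp bal r _; rewrite !reduced_fluxE.
rewrite [RHS](perm_big _ (perm_map_opp Rs_uniq Rs_opp)) big_map.
under [RHS]eq_bigl => rb do rewrite projVN eqr_opp.
by rewrite big_seq_cond [RHS]big_seq_cond; apply: eq_bigr => rb /andP[/bal].
Qed.

End Reduction.

Theorem corollary5p2 (R : realType) (T : finType)
    (Rs : seq (reaction T)) (K : reaction T -> R) :
  kinetic_system Rs K ->
  detailed_balance Rs K ->
  (exists m : T -> R, conservation_law Rs m /\ m <> (fun _ => 0)) ->
  exists s : T, forall ns : R, 0 < ns ->
    detailed_balance (reduced_reactions s Rs) (reduced_rates s Rs K ns).
Proof.
move=> [Rs_uniq _ Rs_opp _] /detailed_balanceP[Nb Nb_gt0 bal] [m [cl_m m_nz]].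
have [s ms_neq0] : exists s, m s != 0.
  apply/existsP; apply: contra_notT m_nz => /existsPn m0.
  by apply: boolp.funext => i; apply/eqP; rewrite -[_ == _]negbK m0.
have orth_m := conservation_law_orth Rs_uniq cl_m.
exists s => ns ns_gt0.
pose lam := ln (ns / Nb s) / m s.
pose N i := Nb i * expR (lam * m i).
have N_gt0 i : 0 < N i by rewrite mulr_gt0 ?expR_gt0.
have Ns : N s = ns.
  by rewrite /N /lam mulfVK // lnK ?posrE ?divr_gt0 // mulrCA divff ?mulr1 ?gt_eqF.
apply/detailed_balanceP; exists (fun v => N (val v)) => [v | ]; first exact: N_gt0.
rewrite -Ns; apply: balanced_reduced => //.
exact: balanced_shift orth_m bal.
Qed.
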